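(* Let $R$ be a ring such that the right module $R_R$ is self-similar. Then $R_R$ is quasi-pseudo principally injective if and only if $R_R$ is semisimple.
   Context: All rings are associative with identity and all modules are unitary right $R$-modules. A submodule $N$ of $M$ is called $M$-cyclic if $N\cong M/L$ for some submodule $L$ of $M$ (equivalently, $N$ is the image of an endomorphism of $M$). $M$ is quasi-pseudo principally injective if for every $M$-cyclic submodule $A$ of $M$, every $R$-monomorphism $A\to M$ extends to an $R$-endomorphism of $M$. A module $M$ is self-similar if every nonzero submodule of $M$ is isomorphic to $M$. A module is semisimple if every submodule is a direct summand. *)

(* We work with the right regular module R_R of a ring R
   (possibly noncommutative, identity possibly equal to 0: pzRingType).
   Submodules of R_R are right ideals, represented as predicates R -> Prop. *)
From HB Require Import structures.
From mathcomp Require Import all_boot all_order all_algebra.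
Set Implicit Arguments. Unset Strict Implicit. Unset Printing Implicit Defensive.
Import GRing.Theory.
Local Open Scope ring_scope.

Definition is_submod (R : pzRingType) (N : R -> Prop) : Prop :=
  [/\ N 0, (forall x y, N x -> N y -> N (x + y)) & (forall x r, N x -> N (x * r))].

Definition hom_on (R : pzRingType) (A : R -> Prop) (f : R -> R) : Prop :=
  (forall x y, A x -> A y -> f (x + y) = f x + f y) /\
  (forall x r, A x -> f (x * r) = f x * r).

Definition is_endo (R : pzRingType) (f : R -> R) : Prop := hom_on (fun _ => True) f.

Definition image_is (R : pzRingType) (f : R -> R) (N : R -> Prop) : Prop :=
  forall y, N y <-> exists x, f x = y.

Definition Mcyclic (R : pzRingType) (A : R -> Prop) : Prop :=
  is_submod A /\ exists f : R -> R, is_endo f /\ image_is f A.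

Definition qppi (R : pzRingType) : Prop :=
  forall A : R -> Prop, Mcyclic A ->
  forall g : R -> R, hom_on A g ->
    (forall x y, A x -> A y -> g x = g y -> x = y) ->
    exists h : R -> R, is_endo h /\ forall x, A x -> h x = g x.

Definition iso_to_RR (R : pzRingType) (N : R -> Prop) : Prop :=
  exists f : R -> R, [/\ is_endo f, injective f & image_is f N].

Definition self_similar (R : pzRingType) : Prop :=
  forall N : R -> Prop, is_submod N -> (exists x, N x /\ x <> 0) -> iso_to_RR N.

Definition semisimple (R : pzRingType) : Prop :=
  forall N : R -> Prop, is_submod N ->
  exists K : R -> Prop, [/\ is_submod K,
     (forall x, N x -> K x -> x = 0) &
     (forall z, exists x y, [/\ N x, K y & z = x + y])].

(* A direct summand A of R_R with complement K carries the projection along K,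
   which is an endomorphism of R_R; composing it with a homomorphism on A gives
   an extension, so semisimplicity yields quasi-pseudo principal injectivity.
   Conversely, every endomorphism of R_R is left multiplication by its value
   at 1.  If R_R is self-similar, a nonzero right ideal N is aR with x |-> a x
   injective, hence R_R-cyclic, and the inverse aR -> R is a monomorphism; by
   quasi-pseudo principal injectivity it extends to left multiplication by
   some b, so b a = 1.  Then e = a b is idempotent with eR = N, and
   {y | e y = 0} = (1 - e)R is a complement of N. *)
From mathcomp Require Import all_boot all_order all_algebra.
From Stdlib Require Import Classical ClassicalEpsilon.
Set Implicit Arguments. Unset Strict Implicit. Unset Printing Implicit Defensive.
Import GRing.Theory.
Local Open Scope ring_scope.

Definition direct_summand (R : pzRingType) (N : R -> Prop) : Prop :=
  exists K : R -> Prop, [/\ is_submod K,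
     (forall x, N x -> K x -> x = 0) &
     (forall z, exists x y, [/\ N x, K y & z = x + y])].

Section Submodules.
Variables (R : pzRingType) (N : R -> Prop).
Hypothesis submod_N : is_submod N.

Lemma submod0 : N 0.
Proof. by case: submod_N. Qed.

Lemma submodD x y : N x -> N y -> N (x + y).
Proof. by case: submod_N => _ + _; apply. Qed.

Lemma submodMr x r : N x -> N (x * r).
Proof. by case: submod_N => _ _; apply. Qed.

Lemma submodN x : N x -> N (- x).
Proof. by move=> Nx; rewrite -mulrN1; apply: submodMr. Qed.

Lemma submodB x y : N x -> N y -> N (x - y).
Proof. by move=> Nx Ny; apply: submodD => //; apply: submodN. Qed.

End Submodules.

Section Projection.
Variables (R : pzRingType) (A K : R -> Prop).
Hypotheses (submod_A : is_submod A) (submod_K : is_submod K).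
Hypothesis disjoint_AK : forall x, A x -> K x -> x = 0.
Hypothesis cover_AK : forall z, exists x y, [/\ A x, K y & z = x + y].

Let proj z := epsilon (inhabits 0) (fun x => A x /\ K (z - x)).

Lemma projP z : A (proj z) /\ K (z - proj z).
Proof.
apply: (epsilon_spec (inhabits 0) (fun x => A x /\ K (z - x))).
have [x [y [Ax Ky ->]]] := cover_AK z.
by exists x; rewrite [x + y]addrC addrK.
Qed.

Lemma proj_uniq z x : A x -> K (z - x) -> proj z = x.
Proof.
move=> Ax Kzx; have [Ap Kzp] := projP z.
apply/eqP; rewrite -subr_eq0; apply/eqP; apply: disjoint_AK.
  exact: submodB.
have -> : proj z - x = (z - x) - (z - proj z) by rewrite opprB [RHS]addrC addrA subrK.
exact: submodB.
Qed.

Lemma proj_endo : is_endo proj.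
Proof.
have AP z := proj1 (projP z); have KP z := proj2 (projP z).
split=> [z1 z2 _ _ | z r _].
- apply: proj_uniq; first exact: submodD.
  by rewrite opprD addrACA; apply: submodD.
- apply: proj_uniq; first exact: submodMr.
  by rewrite -mulrBl; apply: submodMr.
Qed.

Lemma proj_id x : A x -> proj x = x.
Proof. by move=> Ax; apply: proj_uniq; rewrite // subrr; apply: submod0. Qed.

Lemma summand_hom_extend g : hom_on A g ->
  exists h, is_endo h /\ forall x, A x -> h x = g x.
Proof.
case=> gD gM; exists (fun z => g (proj z)); split; last first.
  by move=> x Ax; rewrite proj_id.
have [pD pM] := proj_endo; have AP z := proj1 (projP z).
split=> [z1 z2 _ _ | z r _].
- by rewrite pD // gD //; apply: AP.
- by rewrite pM // gM //; apply: AP.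
Qed.

End Projection.

Lemma semisimple_qppi (R : pzRingType) : semisimple R -> qppi R.
Proof.
move=> Hss A [submod_A _] g homg _.
have [K [submod_K disjoint_AK cover_AK]] := Hss A submod_A.
exact: (summand_hom_extend submod_A submod_K disjoint_AK cover_AK homg).
Qed.

Lemma endo_lmul (R : pzRingType) (f : R -> R) x : is_endo f -> f x = f 1 * x.
Proof. by case=> _ fM; rewrite -fM // mul1r. Qed.

Lemma lmul_endo (R : pzRingType) (a : R) : is_endo (fun x => a * x).
Proof. by split=> [x y _ _ | x r _]; [rewrite mulrDr | rewrite mulrA]. Qed.

Lemma idempotent_direct_summand (R : pzRingType) (e : R) (N : R -> Prop) :
  e * e = e -> image_is (fun x => e * x) N -> direct_summand N.
Proof.
move=> ee imN; exists (fun y => e * y = 0); split.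
- split=> [|x y ex ey|x r ex].
  + by rewrite mulr0.
  + by rewrite mulrDr ex ey addr0.
  + by rewrite mulrA ex mul0r.
- by move=> _ /imN [t <-] ex; rewrite -ee -mulrA ex.
- move=> z; exists (e * z), (z - e * z); split.
  + by apply/imN; exists z.
  + by rewrite mulrBr mulrA ee subrr.
  + by rewrite addrC subrK.
Qed.

Lemma zero_direct_summand (R : pzRingType) (N : R -> Prop) : is_submod N ->
  ~ (exists x, N x /\ x <> 0) -> direct_summand N.
Proof.
move=> submod_N N0; exists (fun _ => True); split=> //.
- by move=> x Nx _; apply: NNPP => x_neq0; apply: N0; exists x.
- by move=> z; exists 0, z; rewrite add0r; split=> //; apply: submod0.
Qed.

Lemma qppi_lmul_left_inverse (R : pzRingType) (a : R) (N : R -> Prop) :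
  qppi R -> is_submod N -> injective (fun x => a * x) ->
  image_is (fun x => a * x) N -> exists b, b * a = 1.
Proof.
move=> Hq submod_N a_inj imN.
pose g y := epsilon (inhabits 0) (fun x => a * x = y).
have gK y : N y -> a * g y = y.
  by move/imN; apply: (epsilon_spec (inhabits 0) (fun x => a * x = y)).
have ga x : g (a * x) = x by apply: a_inj; apply: gK; apply/imN; exists x.
have Na : N a by apply/imN; exists 1; rewrite mulr1.
have homg : hom_on N g.
  split=> [x y Nx Ny | x r Nx]; apply: a_inj.
  - by rewrite mulrDr !gK //; apply: submodD.
  - by rewrite mulrA !gK //; apply: submodMr.
have g_inj x y : N x -> N y -> g x = g y -> x = y.
  by move=> Nx Ny gxy; rewrite -(gK x Nx) -(gK y Ny) gxy.
have cyclic_N : Mcyclic N by split=> //; exists (fun x => a * x); split=> //; apply: lmul_endo.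
have [h [endo_h hg]] := Hq N cyclic_N g homg g_inj.
by exists (h 1); rewrite -endo_lmul // hg // -[a]mulr1 ga.
Qed.

Lemma self_similar_lmul (R : pzRingType) (N : R -> Prop) : iso_to_RR N ->
  exists a : R, injective (fun x => a * x) /\ image_is (fun x => a * x) N.
Proof.
move=> [f [endo_f f_inj imN]]; exists (f 1).
have fE x : f x = f 1 * x by apply: endo_lmul.
split=> [x y | y]; first by rewrite -!fE; apply: f_inj.
by rewrite imN; split=> -[x <-]; exists x; rewrite -fE.
Qed.

Lemma self_similar_qppi_semisimple (R : pzRingType) :
  self_similar R -> qppi R -> semisimple R.
Proof.
move=> Hsim Hq N submod_N.
have [N_nz | N0] := classic (exists x, N x /\ x <> 0); last first.
  exact: zero_direct_summand.
have [a [a_inj imN]] := self_similar_lmul (Hsim N submod_N N_nz).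
have [b ba] := qppi_lmul_left_inverse Hq submod_N a_inj imN.
apply: (@idempotent_direct_summand _ (a * b)).
  by rewrite mulrA -(mulrA a b a) ba mulr1.
move=> y; rewrite imN; split=> -[x <-].
- by exists (a * x); rewrite -mulrA (mulrA b a) ba mul1r.
- by exists (b * x); rewrite mulrA.
Qed.

Theorem corollary2p5 (R : pzRingType) :
  self_similar R -> (qppi R <-> semisimple R).
Proof.
move=> Hsim; split; [exact: self_similar_qppi_semisimple | exact: semisimple_qppi].
Qed.
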